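(* Let $\varepsilon\ge0$, let $N>2$ and $J$ be integers with $0\le J<N$, let $m,M\in(0,1)$ with $m\le M$, and let $c\in[m,M]$. Define $f\colon[m,M]^{N-J}\to\mathbb{R}$ by \[ f(a_1,\dots,a_{N-J})=\Big(e^{\varepsilon}-(e^{\varepsilon}-1)\frac{m+Jc+S}{N+1}\Big)\prod_{i=1}^{N-J}\Bigg(N+\frac{1-a_i}{1-\frac{\min\{m+(N-1)M,\ (N-2)(a_i-m)+Jc+S\}}{N}}\Bigg), \] where $S=\sum_{i=1}^{N-J}a_i$. Then for all $(a_1,\dots,a_{N-J})\in[m,M]^{N-J}$, \[ f(a_1,\dots,a_{N-J})\le\max\Big\{\max_{t\in[m,U_{N-J-1}]}f_{\mathrm{diag}}(t),\ \max_{k\in\{0,1,\dots,N-J\}}\max_{t\in[m,U_k]}f_k(t)\Big\}, \] where \[ f_{\mathrm{diag}}(t)=\Big(e^{\varepsilon}-(e^{\varepsilon}-1)\frac{m+Jc+(N-J)t}{N+1}\Big)\Bigg(N+\frac{1-t}{1-\frac{(2N-J-2)t-(N-2)m+Jc}{N}}\Bigg)^{N-J}, \] and, for $k\in\{0,1,\dots,N-J\}$, \[ f_k(t)=\Big(e^{\varepsilon}-(e^{\varepsilon}-1)\frac{m+S_k(t)}{N+1}\Big)\Bigg(N+\frac{1-t}{1-\frac{(N-2)(t-m)+S_k(t)}{N}}\Bigg)\Bigg(N+\frac{1-m}{1-\frac{S_k(t)}{N}}\Bigg)^{N-J-k-1}\Bigg(N+\frac{1-B_k(t)}{1-\frac{m+(N-1)M}{N}}\Bigg)^{k},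 \] with $S_k(t)=Jc+t+(N-J-k-1)m+kB_k(t)$, \[ B_k(t)=\frac{(N-1)(M+m)-(Jc+(N-J-k-1)m+t)}{N+k-2},\qquad U_k=\frac{(N-1)(M+m)-(Jc+(N-J-k-1)m)}{N+k-1}. \] *)

From Stdlib Require Import Reals Lra Lia.
Open Scope R_scope.

Fixpoint prodR (n : nat) (f : nat -> R) : R :=
  match n with
  | O => 1
  | S n' => prodR n' f * f n'
  end.

Fixpoint sumR (n : nat) (f : nat -> R) : R :=
  match n with
  | O => 0
  | S n' => sumR n' f + f n'
  end.

Section P9.
Variables (eps : R) (N J : nat) (m M c : R).

Let NR := INR N.
Let JR := INR J.
Let nJ := (N - J)%nat.

(* the function f on [m,M]^{N-J}; coordinates a_1..a_{N-J} are a 0 .. a (N-J-1) *)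
Definition f9 (a : nat -> R) : R :=
  let S := sumR nJ a in
  (exp eps - (exp eps - 1) * ((m + JR * c + S) / (NR + 1))) *
  prodR nJ (fun i =>
    NR + (1 - a i) /
         (1 - Rmin (m + (NR - 1) * M) ((NR - 2) * (a i - m) + JR * c + S) / NR)).

Definition fdiag9 (t : R) : R :=
  (exp eps - (exp eps - 1) * ((m + JR * c + INR nJ * t) / (NR + 1))) *
  (NR + (1 - t) /
        (1 - ((2 * NR - JR - 2) * t - (NR - 2) * m + JR * c) / NR)) ^ nJ.

Definition B9 (k : nat) (t : R) : R :=
  ((NR - 1) * (M + m) - (JR * c + (INR nJ - INR k - 1) * m + t)) /
  (NR + INR k - 2).

Definition U9 (k : nat) : R :=
  ((NR - 1) * (M + m) - (JR * c + (INR nJ - INR k - 1) * m)) /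
  (NR + INR k - 1).

Definition S9 (k : nat) (t : R) : R :=
  JR * c + t + (INR nJ - INR k - 1) * m + INR k * B9 k t.

(* the exponent N-J-k-1 may equal -1 (k = N-J), hence an integer power *)
Definition fk9 (k : nat) (t : R) : R :=
  (exp eps - (exp eps - 1) * ((m + S9 k t) / (NR + 1))) *
  (NR + (1 - t) / (1 - ((NR - 2) * (t - m) + S9 k t) / NR)) *
  powerRZ (NR + (1 - m) / (1 - S9 k t / NR))
          (Z.of_nat nJ - Z.of_nat k - 1)%Z *
  (NR + (1 - B9 k t) / (1 - (m + (NR - 1) * M) / NR)) ^ k.

End P9.

From Stdlib Require Import Reals Lra Lia.
Open Scope R_scope.

(* With S the sum of the coordinates, f is a prefactor depending on S alone times
   a product of one-variable factors psi(a_i).  Below the threshold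
   th = m + (D0 - Jc - S)/(N - 2), where D0 = m + (N - 1)M, psi is the homography
   g(z) = N(N-1)/(N-2) + N kappa / ((N-2) den(z)) with den affine and
   kappa = Jc + S - 2 - (N-2)m; above th it is the affine cap line, which bounds
   it on all of [m, M].
   - If the mean t0 of the a_i exceeds U, the cap line and AM-GM give f <= f_diag(U).
   - Otherwise t0 <= th.  If kappa <= 0, g is concave and psi lies below the tangent
     of g at t0, so AM-GM gives f <= f_diag(t0).
   - If kappa > 0, g is increasing and g(x) g(y) <= g(x - d) g(y + d).  Truncating the
     a_i at th (redistributing the excess to keep S) only increases the product, and
     spreading pairs apart then pushes all coordinates but one to m or th.  With k
     coordinates at th = B_k(t), this is exactly f_k(t). *)

Lemma prodR_ext n f g : (forall i, (i < n)%nat -> f i = g i) -> prodR n f = prodR n g.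
Proof.
  induction n as [|n IH]; intros Hfg; simpl; [reflexivity|].
  rewrite IH by (intros; apply Hfg; lia). rewrite Hfg by lia. reflexivity.
Qed.

Lemma prodR_ge0 n f : (forall i, (i < n)%nat -> 0 <= f i) -> 0 <= prodR n f.
Proof.
  induction n as [|n IH]; intros Hf; simpl; [lra|].
  apply Rmult_le_pos; [apply IH; intros; apply Hf|apply Hf]; lia.
Qed.

Lemma prodR_le n f g : (forall i, (i < n)%nat -> 0 <= f i <= g i) -> prodR n f <= prodR n g.
Proof.
  induction n as [|n IH]; intros Hfg; simpl; [lra|].
  apply Rmult_le_compat.
  - apply prodR_ge0; intros; apply Hfg; lia.
  - apply Hfg; lia.
  - apply IH; intros; apply Hfg; lia.
  - apply Hfg; lia.
Qed.

Lemma sumR_le n f g : (forall i, (i < n)%nat -> f i <= g i) -> sumR n f <= sumR n g.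
Proof.
  induction n as [|n IH]; intros Hfg; simpl; [lra|].
  apply Rplus_le_compat; [apply IH; intros|]; apply Hfg; lia.
Qed.

Lemma sumR_const n x : sumR n (fun _ => x) = INR n * x.
Proof. induction n as [|n IH]; simpl sumR; [simpl; ring|]. rewrite IH, S_INR; ring. Qed.

Lemma sumR_affine n al be g : sumR n (fun i => al + be * g i) = INR n * al + be * sumR n g.
Proof. induction n as [|n IH]; simpl sumR; [simpl; ring|]. rewrite IH, S_INR; ring. Qed.

(* Each factor obeys [L <= Y exp (L / Y - 1)], i.e. [1 + x <= exp x]. *)
Lemma prodR_le_pow_exp n L Y : 0 < Y -> (forall i, (i < n)%nat -> 0 <= L i) ->
  prodR n L <= Y ^ n * exp (sumR n L / Y - INR n).
Proof.
  intros HY. induction n as [|n IH]; intros HL; cbn [prodR sumR pow].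
  - replace (0 / Y - INR 0) with 0 by (simpl; field; lra). rewrite exp_0; lra.
  - assert (Hlast : L n <= Y * exp (L n / Y - 1)).
    { pose proof (exp_ineq1_le (L n / Y - 1)).
      replace (L n) with (Y * (1 + (L n / Y - 1))) at 1 by (field; lra).
      apply Rmult_le_compat_l; lra. }
    replace ((sumR n L + L n) / Y - INR (S n))
      with ((sumR n L / Y - INR n) + (L n / Y - 1)) by (rewrite S_INR; field; lra).
    rewrite exp_plus.
    replace (Y * Y ^ n * (exp (sumR n L / Y - INR n) * exp (L n / Y - 1)))
      with ((Y ^ n * exp (sumR n L / Y - INR n)) * (Y * exp (L n / Y - 1))) by ring.
    apply Rmult_le_compat.
    + apply prodR_ge0; intros; apply HL; lia.
    + apply HL; lia.
    + apply IH; intros; apply HL; lia.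
    + exact Hlast.
Qed.

Lemma prodR_le_pow_mean n L Y : 0 < Y -> (forall i, (i < n)%nat -> 0 <= L i) ->
  sumR n L = INR n * Y -> prodR n L <= Y ^ n.
Proof.
  intros HY HL Hsum.
  eapply Rle_trans; [apply prodR_le_pow_exp; eauto|].
  rewrite Hsum. replace (INR n * Y / Y - INR n) with 0 by (field; lra).
  rewrite exp_0; lra.
Qed.

Lemma prodR_le_affine_at_mean n (psi : R -> R) (a : nat -> R) al be :
  (0 < n)%nat -> 0 < al + be * (sumR n a / INR n) ->
  (forall i, (i < n)%nat -> 0 <= psi (a i) <= al + be * a i) ->
  prodR n (fun i => psi (a i)) <= (al + be * (sumR n a / INR n)) ^ n.
Proof.
  intros Hn Hmean Hpsi.
  assert (HnR : 0 < INR n) by (apply lt_0_INR; lia).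
  apply Rle_trans with (prodR n (fun i => al + be * a i)); [apply prodR_le; exact Hpsi|].
  apply prodR_le_pow_mean; [exact Hmean| intros i Hi; specialize (Hpsi i Hi); lra|].
  rewrite sumR_affine; field; lra.
Qed.

Lemma sumR_truncate n a th : sumR n a <= INR n * th ->
  exists b, sumR n b = sumR n a /\ forall i, (i < n)%nat -> Rmin (a i) th <= b i <= th.
Proof.
  intros Hs.
  set (s0 := sumR n (fun i => Rmin (a i) th)).
  assert (Hs0 : s0 <= sumR n a) by (apply sumR_le; intros; apply Rmin_l).
  assert (Hgap : s0 <= INR n * th)
    by (rewrite <- sumR_const; apply sumR_le; intros; apply Rmin_r).
  set (lam := if Req_EM_T s0 (INR n * th) then 0 else (sumR n a - s0) / (INR n * th - s0)).
  assert (Hlam : 0 <= lam <= 1 /\ s0 + lam * (INR n * th - s0) = sumR n a).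
  { unfold lam; destruct (Req_EM_T s0 (INR n * th)) as [E|E]; [lra|].
    split; [split|field; lra].
    - apply Rmult_le_pos; [|apply Rlt_le, Rinv_0_lt_compat]; lra.
    - apply (Rmult_le_reg_r (INR n * th - s0)); [lra|].
      unfold Rdiv; rewrite Rmult_assoc, Rinv_l; lra. }
  exists (fun i => lam * th + (1 - lam) * Rmin (a i) th). split.
  - rewrite sumR_affine; fold s0; lra.
  - intros i _. pose proof (Rmin_r (a i) th). nra.
Qed.

Section Spreading.
Variables (psi : R -> R) (lo hi : R).
Hypothesis psi_ge0 : forall x, lo <= x <= hi -> 0 <= psi x.
Hypothesis psi_spread : forall x y d, lo <= x - d -> x <= y -> 0 <= d -> y + d <= hi ->
  psi x * psi y <= psi (x - d) * psi (y + d).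

Lemma spread_to_lo x y : lo <= x <= hi -> lo <= y <= hi -> x + y - lo <= hi ->
  psi x * psi y <= psi (x + y - lo) * psi lo.
Proof.
  intros Hx Hy Hxy. destruct (Rle_dec x y).
  - pose proof (psi_spread x y (x - lo)) as H.
    replace (x - (x - lo)) with lo in H by ring.
    replace (y + (x - lo)) with (x + y - lo) in H by ring.
    rewrite Rmult_comm with (r1 := psi (x + y - lo)). apply H; lra.
  - pose proof (psi_spread y x (y - lo)) as H.
    replace (y - (y - lo)) with lo in H by ring.
    replace (x + (y - lo)) with (x + y - lo) in H by ring.
    rewrite Rmult_comm with (r1 := psi x), Rmult_comm with (r1 := psi (x + y - lo)). apply H; lra.
Qed.

Lemma spread_to_hi x y : lo <= x <= hi -> lo <= y <= hi -> lo <= x + y - hi ->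
  psi x * psi y <= psi (x + y - hi) * psi hi.
Proof.
  intros Hx Hy Hxy. destruct (Rle_dec x y).
  - pose proof (psi_spread x y (hi - y)) as H.
    replace (x - (hi - y)) with (x + y - hi) in H by ring.
    replace (y + (hi - y)) with hi in H by ring.
    apply H; lra.
  - pose proof (psi_spread y x (hi - x)) as H.
    replace (y - (hi - x)) with (x + y - hi) in H by ring.
    replace (x + (hi - x)) with hi in H by ring.
    rewrite Rmult_comm. apply H; lra.
Qed.

(* Each new coordinate is merged with the current free one, pushing one of the
   two to [lo] or [hi]. *)
Lemma prodR_spread n b : (0 < n)%nat -> (forall i, (i < n)%nat -> lo <= b i <= hi) ->
  exists t p q, (p + q + 1 = n)%nat /\ lo <= t <= hi /\
    t + INR p * lo + INR q * hi = sumR n b /\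
    prodR n (fun i => psi (b i)) <= psi t * psi lo ^ p * psi hi ^ q.
Proof.
  induction n as [|n IH]; intros Hn Hb; [lia|].
  destruct (Nat.eq_dec n 0) as [->|Hn0].
  { exists (b 0%nat), 0%nat, 0%nat. simpl.
    split; [lia|]. split; [apply Hb; lia|]. split; lra. }
  destruct IH as (t & p & q & Hpq & Ht & Hsum & Hprod); [lia|intros; apply Hb; lia|].
  assert (Hx : lo <= b n <= hi) by (apply Hb; lia).
  assert (Hrest : 0 <= psi lo ^ p * psi hi ^ q)
    by (apply Rmult_le_pos; apply pow_le, psi_ge0; lra).
  assert (Hstep : prodR (S n) (fun i => psi (b i))
                  <= (psi t * psi (b n)) * (psi lo ^ p * psi hi ^ q)).
  { cbn [prodR]. eapply Rle_trans.
    - apply Rmult_le_compat_r; [apply psi_ge0, Hx|exact Hprod].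
    - right; ring. }
  cbn [sumR]. destruct (Rle_dec (t + b n - lo) hi) as [Hlo|Hhi].
  - exists (t + b n - lo), (S p), q. split; [lia|]. split; [lra|]. split; [rewrite S_INR; lra|].
    eapply Rle_trans; [exact Hstep|].
    replace (psi (t + b n - lo) * psi lo ^ S p * psi hi ^ q)
      with ((psi (t + b n - lo) * psi lo) * (psi lo ^ p * psi hi ^ q)) by (simpl; ring).
    apply Rmult_le_compat_r; [exact Hrest|apply spread_to_lo; lra].
  - exists (t + b n - hi), p, (S q). split; [lia|]. split; [lra|]. split; [rewrite S_INR; lra|].
    eapply Rle_trans; [exact Hstep|].
    replace (psi (t + b n - hi) * psi lo ^ p * psi hi ^ S q)
      with ((psi (t + b n - hi) * psi hi) * (psi lo ^ p * psi hi ^ q)) by (simpl; ring).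
    apply Rmult_le_compat_r; [exact Hrest|apply spread_to_hi; lra].
Qed.

End Spreading.

Lemma affine_inv_spread al be a1 a2 b1 b2 : 0 <= al -> 0 <= be ->
  0 < a1 -> 0 < a2 -> 0 < b1 -> 0 < b2 -> b1 + b2 = a1 + a2 -> b1 * b2 <= a1 * a2 ->
  (al + be / a1) * (al + be / a2) <= (al + be / b1) * (al + be / b2).
Proof.
  intros Hal Hbe Ha1 Ha2 Hb1 Hb2 Hsum Hprod.
  replace ((al + be / a1) * (al + be / a2))
    with (al ^ 2 + be * (al * (a1 + a2) + be) / (a1 * a2)) by (field; lra).
  replace ((al + be / b1) * (al + be / b2))
    with (al ^ 2 + be * (al * (a1 + a2) + be) / (b1 * b2)) by (rewrite <- Hsum; field; lra).
  apply Rplus_le_compat_l, Rmult_le_compat_l.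
  - apply Rmult_le_pos; [lra|]. nra.
  - apply Rinv_le_contravar; [nra|exact Hprod].
Qed.

(* With [T = J c + S], [factor N m D0 T (a i)] is the i-th factor of [f9];
   [cap_factor] and [free_factor] are its two branches, the minimum being [D0]
   exactly for [z >= m + (D0 - T) / (N - 2)]. *)
Definition cap_factor (N D0 z : R) := N + (1 - z) / (1 - D0 / N).
Definition free_factor (N m T z : R) := N + (1 - z) / (1 - ((N - 2) * (z - m) + T) / N).
Definition factor (N m D0 T z : R) := N + (1 - z) / (1 - Rmin D0 ((N - 2) * (z - m) + T) / N).
Definition free_den (N m T z : R) := N - (N - 2) * (z - m) - T.
(* The derivative of [free_factor N m T] at [t]. *)
Definition free_slope (N m T t : R) := N * (T - 2 - (N - 2) * m) / free_den N m T t ^ 2.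

Lemma free_factor_cap_eq N m D0 T z : (N - 2) * (z - m) + T = D0 ->
  free_factor N m T z = cap_factor N D0 z.
Proof. intros H. unfold free_factor, cap_factor. rewrite H. reflexivity. Qed.

Section Factor.
Variables (N m D0 T : R).
Hypotheses (HN : 2 < N) (HD0 : D0 < N).

Local Notation th := (m + (D0 - T) / (N - 2)).
Local Notation kappa := (T - 2 - (N - 2) * m).
Local Notation den := (free_den N m T).
Local Notation free := (free_factor N m T).
Local Notation cap := (cap_factor N D0).

Lemma excess_over_cap z : (N - 2) * (z - m) + T - D0 = (N - 2) * (z - th).
Proof. field. lra. Qed.

Lemma free_den_ge z : z <= th -> N - D0 <= den z.
Proof. intros Hz. unfold free_den. pose proof (excess_over_cap z). nra. Qed.

Lemma cap_den_pos : 0 < 1 - D0 / N.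
Proof.
  apply (Rmult_lt_reg_r N); [lra|].
  unfold Rdiv. rewrite Rmult_minus_distr_r, Rmult_assoc, Rinv_l; lra.
Qed.

Lemma cap_factor_affine z : cap z = (N + / (1 - D0 / N)) + - / (1 - D0 / N) * z.
Proof. unfold cap_factor. pose proof cap_den_pos. field. lra. Qed.

Lemma cap_factor_antitone x y : x <= y -> cap y <= cap x.
Proof.
  intros Hxy. rewrite !cap_factor_affine.
  pose proof (Rinv_0_lt_compat _ cap_den_pos). nra.
Qed.

Lemma cap_factor_ge z : z <= 1 -> N <= cap z.
Proof.
  intros Hz. unfold cap_factor. pose proof cap_den_pos.
  assert (0 <= (1 - z) / (1 - D0 / N))
    by (apply Rmult_le_pos; [|apply Rlt_le, Rinv_0_lt_compat]; lra).
  lra.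
Qed.

Lemma factor_free z : z <= th -> factor N m D0 T z = free z.
Proof.
  intros Hz. unfold factor, free_factor. rewrite Rmin_right; [reflexivity|].
  pose proof (excess_over_cap z). nra.
Qed.

Lemma factor_cap z : th <= z -> factor N m D0 T z = cap z.
Proof.
  intros Hz. unfold factor, cap_factor. rewrite Rmin_left; [reflexivity|].
  pose proof (excess_over_cap z). nra.
Qed.

Lemma factor_le_cap z : z <= 1 -> factor N m D0 T z <= cap z.
Proof.
  intros Hz. unfold factor, cap_factor.
  apply Rplus_le_compat_l, Rmult_le_compat_l; [lra|].
  apply Rinv_le_contravar; [exact cap_den_pos|].
  apply Rplus_le_compat_l, Ropp_le_contravar, Rmult_le_compat_r.
  - apply Rlt_le, Rinv_0_lt_compat; lra.
  - apply Rmin_l.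
Qed.

Lemma factor_ge z : z <= 1 -> N <= factor N m D0 T z.
Proof.
  intros Hz. unfold factor.
  assert (Hden : 1 - D0 / N <= 1 - Rmin D0 ((N - 2) * (z - m) + T) / N).
  { apply Rplus_le_compat_l, Ropp_le_contravar, Rmult_le_compat_r.
    - apply Rlt_le, Rinv_0_lt_compat; lra.
    - apply Rmin_l. }
  pose proof cap_den_pos.
  assert (0 <= (1 - z) / (1 - Rmin D0 ((N - 2) * (z - m) + T) / N)).
  { apply Rmult_le_pos; [lra|apply Rlt_le, Rinv_0_lt_compat; lra]. }
  lra.
Qed.

(* Monotonicity, concavity and the spreading inequality of the free factor all
   follow from this form. *)
Lemma free_factorE z : den z <> 0 ->
  free z = N * (N - 1) / (N - 2) + N * kappa / (N - 2) / den z.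
Proof. unfold free_factor, free_den. intros Hz. field. split; lra. Qed.

Lemma free_factor_tangent t z : kappa <= 0 -> t <= th -> z <= th ->
  free z <= free t + free_slope N m T t * (z - t).
Proof.
  intros Hk Ht Hz.
  pose proof (free_den_ge t Ht) as Hdt. pose proof (free_den_ge z Hz) as Hdz.
  assert (Hgap : free t + free_slope N m T t * (z - t) - free z
                 = N * (- kappa) * (N - 2) * (z - t) ^ 2 / (den t ^ 2 * den z)).
  { unfold free_factor, free_slope, free_den in *. field. split; lra. }
  assert (0 <= N * (- kappa) * (N - 2) * (z - t) ^ 2 / (den t ^ 2 * den z)).
  { apply Rmult_le_pos.
    - apply Rmult_le_pos; [|apply pow2_ge_0]. apply Rmult_le_pos; nra.
    - apply Rlt_le, Rinv_0_lt_compat, Rmult_lt_0_compat; [apply pow_lt|]; lra. }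
  lra.
Qed.

(* The left-hand side is the slope of the cap line. *)
Lemma cap_slope_le_free_slope t : kappa <= 0 -> th <= 1 -> t <= th ->
  - / (1 - D0 / N) <= free_slope N m T t.
Proof.
  intros Hk Hth Ht. pose proof (free_den_ge t Ht) as Hdt.
  assert (Hk' : - kappa <= N - D0) by (pose proof (excess_over_cap 1); nra).
  assert (Hgap : free_slope N m T t - - / (1 - D0 / N)
                 = N * (kappa * (N - D0) + den t ^ 2) / (den t ^ 2 * (N - D0))).
  { unfold free_slope. field. split; lra. }
  assert (0 <= N * (kappa * (N - D0) + den t ^ 2) / (den t ^ 2 * (N - D0))).
  { apply Rmult_le_pos; [apply Rmult_le_pos; nra|].
    apply Rlt_le, Rinv_0_lt_compat, Rmult_lt_0_compat; [apply pow_lt|]; lra. }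
  lra.
Qed.

Lemma factor_le_tangent t z : kappa <= 0 -> t <= th -> z <= 1 ->
  factor N m D0 T z <= free t + free_slope N m T t * (z - t).
Proof.
  intros Hk Ht Hz. destruct (Rle_lt_dec z th) as [Hzth|Hthz].
  - rewrite factor_free by exact Hzth. apply free_factor_tangent; assumption.
  - rewrite factor_cap by lra.
    assert (Hcap : cap z = free th + - / (1 - D0 / N) * (z - th)).
    { rewrite (free_factor_cap_eq _ _ D0) by (pose proof (excess_over_cap th); lra).
      rewrite !cap_factor_affine. ring. }
    pose proof (free_factor_tangent t th Hk Ht (Rle_refl _)).
    pose proof (cap_slope_le_free_slope t Hk ltac:(lra) Ht).
    assert (- / (1 - D0 / N) * (z - th) <= free_slope N m T t * (z - th))
      by (apply Rmult_le_compat_r; lra).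
    lra.
Qed.

Lemma free_factor_ge z : 0 <= kappa -> z <= th -> N * (N - 1) / (N - 2) <= free z.
Proof.
  intros Hk Hz. pose proof (free_den_ge z Hz).
  rewrite free_factorE by lra.
  assert (0 <= N * kappa / (N - 2) / den z).
  { apply Rmult_le_pos; [apply Rmult_le_pos; [nra|]|]; apply Rlt_le, Rinv_0_lt_compat; lra. }
  lra.
Qed.

Lemma free_factor_le x y : 0 <= kappa -> x <= y -> y <= th -> free x <= free y.
Proof.
  intros Hk Hxy Hy. pose proof (free_den_ge y Hy). pose proof (free_den_ge x ltac:(lra)).
  rewrite !free_factorE by lra.
  apply Rplus_le_compat_l, Rmult_le_compat_l.
  - apply Rmult_le_pos; [nra|apply Rlt_le, Rinv_0_lt_compat; lra].
  - apply Rinv_le_contravar; [lra|]. unfold free_den. nra.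
Qed.

Lemma free_factor_spread x y d : 0 <= kappa -> x <= y -> 0 <= d -> y + d <= th ->
  free x * free y <= free (x - d) * free (y + d).
Proof.
  intros Hk Hxy Hd Hyd.
  pose proof (free_den_ge (x - d) ltac:(lra)). pose proof (free_den_ge x ltac:(lra)).
  pose proof (free_den_ge y ltac:(lra)). pose proof (free_den_ge (y + d) Hyd).
  rewrite !free_factorE by lra.
  apply affine_inv_spread; try lra.
  - apply Rmult_le_pos; [nra|apply Rlt_le, Rinv_0_lt_compat; lra].
  - apply Rmult_le_pos; [nra|apply Rlt_le, Rinv_0_lt_compat; lra].
  - unfold free_den. ring.
  - assert (den (x - d) * den (y + d) = den x * den y - (N - 2) ^ 2 * d * (y - x + d))
      by (unfold free_den; ring).
    assert (0 <= (N - 2) ^ 2 * d * (y - x + d))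
      by (apply Rmult_le_pos; [apply Rmult_le_pos; [apply pow2_ge_0|]|]; lra).
    lra.
Qed.

Lemma factor_le_free_truncated z w : 0 <= kappa -> z <= 1 -> Rmin z th <= w <= th ->
  factor N m D0 T z <= free w.
Proof.
  intros Hk Hz Hw. destruct (Rle_lt_dec z th) as [Hzth|Hthz].
  - rewrite Rmin_left in Hw by exact Hzth.
    rewrite factor_free by exact Hzth. apply free_factor_le; lra.
  - rewrite Rmin_right in Hw by lra.
    replace w with th by lra.
    rewrite factor_cap by lra.
    rewrite (free_factor_cap_eq _ _ D0) by (pose proof (excess_over_cap th); lra).
    apply cap_factor_antitone; lra.
Qed.

End Factor.

Definition prefactor (eps N s : R) := exp eps - (exp eps - 1) * (s / (N + 1)).

Lemma prefactor_ge1 eps N s : 0 <= eps -> 0 < N + 1 -> s <= N + 1 -> 1 <= prefactor eps N s.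
Proof.
  intros Heps HN Hs. unfold prefactor. pose proof (exp_ineq1_le eps).
  assert (s / (N + 1) <= 1).
  { apply (Rmult_le_reg_r (N + 1)); [lra|]. unfold Rdiv. rewrite Rmult_assoc, Rinv_l; lra. }
  nra.
Qed.

Lemma prefactor_antitone eps N s s' : 0 <= eps -> 0 < N + 1 -> s <= s' ->
  prefactor eps N s' <= prefactor eps N s.
Proof.
  intros Heps HN Hs. unfold prefactor. pose proof (exp_ineq1_le eps).
  assert (s / (N + 1) <= s' / (N + 1))
    by (apply Rmult_le_compat_r; [apply Rlt_le, Rinv_0_lt_compat|]; lra).
  nra.
Qed.

Section Proposition9.
Variables (eps : R) (N J : nat) (m M c : R).
Hypotheses (Heps : 0 <= eps) (HN : (2 < N)%nat) (HJ : (J < N)%nat)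
  (Hm : 0 < m < 1) (HM : M < 1) (HmM : m <= M) (Hc : m <= c <= M).

Local Notation NR := (INR N).
Local Notation JR := (INR J).
Local Notation nJ := (N - J)%nat.
Local Notation D0 := (m + (INR N - 1) * M).
Local Notation U := (U9 N J m M c (N - J - 1)).

Lemma NR_gt2 : 2 < NR.
Proof. replace 2 with (INR 2) by reflexivity. apply lt_INR, HN. Qed.

Lemma JR_add1_le_NR : JR + 1 <= NR.
Proof. rewrite <- S_INR. apply le_INR, HJ. Qed.

Lemma INR_nJ : INR nJ = NR - JR.
Proof. apply minus_INR. lia. Qed.

Lemma D0_lt_NR : D0 < NR.
Proof. pose proof NR_gt2. nra. Qed.

Local Hint Resolve NR_gt2 D0_lt_NR : core.

Lemma f9_eq a : f9 eps N J m M c a =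
  prefactor eps NR (m + JR * c + sumR nJ a) *
  prodR nJ (fun i => factor NR m D0 (JR * c + sumR nJ a) (a i)).
Proof.
  unfold f9, prefactor; cbv zeta. f_equal. apply prodR_ext. intros i _.
  unfold factor. rewrite Rplus_assoc. reflexivity.
Qed.

Lemma fdiag9_eq t : fdiag9 eps N J m c t =
  prefactor eps NR (m + JR * c + INR nJ * t) * free_factor NR m (JR * c + INR nJ * t) t ^ nJ.
Proof.
  unfold fdiag9, prefactor, free_factor; cbv zeta.
  replace ((2 * NR - JR - 2) * t - (NR - 2) * m + JR * c)
    with ((NR - 2) * (t - m) + (JR * c + INR nJ * t)) by (rewrite INR_nJ; ring).
  reflexivity.
Qed.

Lemma fk9_eq k p t : (p + k + 1 = nJ)%nat -> fk9 eps N J m M c k t =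
  prefactor eps NR (m + S9 N J m M c k t) *
  free_factor NR m (S9 N J m M c k t) t *
  free_factor NR m (S9 N J m M c k t) m ^ p *
  cap_factor NR D0 (B9 N J m M c k t) ^ k.
Proof.
  intros Hp. unfold fk9, prefactor, free_factor, cap_factor; cbv zeta.
  replace (Z.of_nat nJ - Z.of_nat k - 1)%Z with (Z.of_nat p) by lia.
  rewrite <- pow_powerRZ.
  replace ((NR - 2) * (m - m) + S9 N J m M c k t) with (S9 N J m M c k t) by ring.
  reflexivity.
Qed.

Lemma U_diag_eq : U = ((NR - 1) * (M + m) - JR * c) / (2 * NR - JR - 2).
Proof.
  unfold U9; cbv zeta. rewrite (minus_INR (N - J) 1) by lia. rewrite INR_nJ.
  f_equal; simpl; ring.
Qed.

(* [U] is the mean at which the diagonal point reaches the cap [D0]. *)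
Lemma U_diag_threshold : (NR - 2) * (U - m) + (JR * c + INR nJ * U) = D0.
Proof.
  pose proof JR_add1_le_NR. pose proof NR_gt2.
  rewrite INR_nJ, U_diag_eq. field. lra.
Qed.

Lemma U_diag_ge_m : m <= U.
Proof.
  pose proof JR_add1_le_NR. pose proof NR_gt2. pose proof (pos_INR J).
  assert (JR * c <= JR * M) by (apply Rmult_le_compat_l; lra).
  assert (0 <= (NR - JR - 1) * (M - m)) by (apply Rmult_le_pos; lra).
  rewrite U_diag_eq. apply (Rmult_le_reg_r (2 * NR - JR - 2)); [lra|].
  unfold Rdiv. rewrite Rmult_assoc, Rinv_l by lra. nra.
Qed.

Section Point.
Variable a : nat -> R.
Hypothesis Ha : forall i, (i < nJ)%nat -> m <= a i <= M.

Local Notation sa := (sumR (N - J) a).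
Local Notation T := (INR J * c + sumR (N - J) a).
Local Notation t0 := (sumR (N - J) a / INR (N - J)).
Local Notation th := (m + (D0 - T) / (INR N - 2)).
Local Notation psi := (factor (INR N) m D0 T).

Lemma mean_eq : INR nJ * t0 = sa.
Proof. assert (0 < INR nJ) by (apply lt_0_INR; lia). field. lra. Qed.

Lemma mean_bounds : m <= t0 <= M.
Proof.
  assert (0 < INR nJ) by (apply lt_0_INR; lia).
  assert (INR nJ * m <= sa <= INR nJ * M).
  { rewrite <- !sumR_const. split; apply sumR_le; intros i Hi; apply Ha, Hi. }
  pose proof mean_eq. split; nra.
Qed.

Lemma prefactor_at_point_ge1 : 1 <= prefactor eps NR (m + JR * c + sa).
Proof.
  pose proof mean_eq. pose proof mean_bounds. pose proof (pos_INR J). pose proof NR_gt2.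
  assert (JR * c <= JR * M) by (apply Rmult_le_compat_l; lra).
  assert (Hsa : sa <= (NR - JR) * M)
    by (rewrite <- INR_nJ, <- mean_eq; apply Rmult_le_compat_l; [apply pos_INR|lra]).
  assert (NR * M <= NR * 1) by (apply Rmult_le_compat_l; lra).
  apply prefactor_ge1; [exact Heps|lra|]. lra.
Qed.

Lemma mean_le_th : t0 <= U -> t0 <= th.
Proof.
  intros Ht0. pose proof NR_gt2. pose proof JR_add1_le_NR.
  pose proof U_diag_threshold. pose proof mean_eq.
  pose proof (excess_over_cap NR m D0 T NR_gt2 t0).
  assert (INR nJ * t0 <= INR nJ * U) by (apply Rmult_le_compat_l; [apply pos_INR|lra]).
  nra.
Qed.

Lemma f9_le_fdiag_cap : U < t0 -> f9 eps N J m M c a <= fdiag9 eps N J m c U.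
Proof.
  intros Hcap. pose proof mean_bounds. pose proof prefactor_at_point_ge1. pose proof NR_gt2.
  rewrite f9_eq, fdiag9_eq, (free_factor_cap_eq _ _ D0) by exact U_diag_threshold.
  assert (Hprod : prodR nJ (fun i => psi (a i)) <= cap_factor NR D0 t0 ^ nJ).
  { rewrite cap_factor_affine by auto. apply prodR_le_affine_at_mean; [lia| |].
    - rewrite <- cap_factor_affine by auto.
      pose proof (cap_factor_ge NR D0 NR_gt2 D0_lt_NR t0 ltac:(lra)). lra.
    - intros i Hi. pose proof (Ha i Hi). rewrite <- cap_factor_affine by auto.
      pose proof (factor_ge NR m D0 T NR_gt2 D0_lt_NR (a i) ltac:(lra)).
      split; [lra|apply factor_le_cap; auto; lra]. }
  assert (HP : prefactor eps NR (m + JR * c + sa) <= prefactor eps NR (m + JR * c + INR nJ * U)).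
  { apply prefactor_antitone; [exact Heps|lra|].
    rewrite <- mean_eq. apply Rplus_le_compat_l, Rmult_le_compat_l; [apply pos_INR|lra]. }
  pose proof (cap_factor_ge NR D0 NR_gt2 D0_lt_NR U ltac:(lra)) as HU.
  apply Rle_trans with (prefactor eps NR (m + JR * c + sa) * cap_factor NR D0 U ^ nJ).
  - apply Rmult_le_compat_l; [lra|]. eapply Rle_trans; [exact Hprod|]. apply pow_incr. split.
    + pose proof (cap_factor_ge NR D0 NR_gt2 D0_lt_NR t0 ltac:(lra)). lra.
    + apply cap_factor_antitone; auto; lra.
  - apply Rmult_le_compat_r; [apply pow_le; lra|exact HP].
Qed.

Lemma f9_le_fdiag_concave : t0 <= U -> T <= 2 + (NR - 2) * m ->
  f9 eps N J m M c a <= fdiag9 eps N J m c t0.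
Proof.
  intros Hfree Hk. pose proof mean_bounds. pose proof (mean_le_th Hfree). pose proof NR_gt2.
  rewrite f9_eq, fdiag9_eq, mean_eq.
  apply Rmult_le_compat_l; [pose proof prefactor_at_point_ge1; lra|].
  set (sl := free_slope NR m T t0).
  assert (Hfree0 : NR <= free_factor NR m T t0).
  { rewrite <- (factor_free NR m D0 T) by auto. apply factor_ge; auto; lra. }
  replace (free_factor NR m T t0) with ((free_factor NR m T t0 - sl * t0) + sl * t0) by ring.
  apply prodR_le_affine_at_mean; [lia|lra|].
  intros i Hi. pose proof (Ha i Hi).
  pose proof (factor_ge NR m D0 T NR_gt2 D0_lt_NR (a i) ltac:(lra)) as Hge.
  pose proof (factor_le_tangent NR m D0 T NR_gt2 D0_lt_NR t0 (a i)) as Htan.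
  specialize (Htan ltac:(lra) ltac:(lra) ltac:(lra)).
  fold sl in Htan. split; [lra|]. eapply Rle_trans; [exact Htan|]. right. ring.
Qed.

Section SpreadProfile.
Variables (p q : nat) (t : R).
Hypotheses (Hpq : (p + q + 1 = nJ)%nat) (Ht : t + INR p * m + INR q * th = sa).

Lemma INR_spread_p : INR nJ - INR q - 1 = INR p.
Proof. rewrite <- Hpq, !plus_INR. simpl. ring. Qed.

Lemma spread_numerator : (NR - 1) * (M + m) - (JR * c + INR p * m + t) = th * (NR + INR q - 2).
Proof.
  pose proof NR_gt2.
  assert ((NR - 2) * (th - m) = D0 - T) by (field; lra).
  lra.
Qed.

Lemma B9_spread : B9 N J m M c q t = th.
Proof.
  pose proof NR_gt2. pose proof (pos_INR q).
  unfold B9; cbv zeta. rewrite INR_spread_p, spread_numerator. field. lra.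
Qed.

Lemma S9_spread : S9 N J m M c q t = T.
Proof. unfold S9; cbv zeta. rewrite B9_spread, INR_spread_p. lra. Qed.

Lemma le_U9_spread : t <= th -> t <= U9 N J m M c q.
Proof.
  intros Htth. pose proof NR_gt2. pose proof (pos_INR q).
  unfold U9; cbv zeta. rewrite INR_spread_p.
  replace ((NR - 1) * (M + m) - (JR * c + INR p * m)) with (th * (NR + INR q - 2) + t)
    by (pose proof spread_numerator; lra).
  apply (Rmult_le_reg_r (NR + INR q - 1)); [lra|].
  unfold Rdiv. rewrite Rmult_assoc, Rinv_l by lra. nra.
Qed.

End SpreadProfile.

Lemma prodR_factor_le_spread : t0 <= U -> 2 + (NR - 2) * m < T ->
  exists t p q, (p + q + 1 = nJ)%nat /\ m <= t <= th /\ t + INR p * m + INR q * th = sa /\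
    prodR nJ (fun i => psi (a i)) <=
    free_factor NR m T t * free_factor NR m T m ^ p * free_factor NR m T th ^ q.
Proof.
  intros Hfree Hk. pose proof mean_bounds. pose proof (mean_le_th Hfree). pose proof NR_gt2.
  destruct (sumR_truncate nJ a th) as (b & Hbsum & Hb).
  { rewrite <- mean_eq at 1. apply Rmult_le_compat_l; [apply pos_INR|lra]. }
  destruct (prodR_spread (free_factor NR m T) m th) with (n := nJ) (b := b)
    as (t & p & q & Hpq & Ht & Htsum & Hspread).
  - intros x Hx. pose proof (free_factor_ge NR m D0 T NR_gt2 D0_lt_NR x ltac:(lra) ltac:(lra)).
    assert (0 <= NR * (NR - 1) / (NR - 2))
      by (apply Rmult_le_pos; [nra|apply Rlt_le, Rinv_0_lt_compat; lra]).
    lra.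
  - intros x y d Hx Hxy Hd Hyd. apply (free_factor_spread NR m D0 T); auto; lra.
  - lia.
  - intros i Hi. specialize (Hb i Hi). pose proof (Ha i Hi).
    pose proof (Rmin_glb (a i) th m ltac:(lra) ltac:(lra)). lra.
  - exists t, p, q. split; [exact Hpq|]. split; [exact Ht|]. split; [lra|].
    eapply Rle_trans; [|exact Hspread]. apply prodR_le. intros i Hi. pose proof (Ha i Hi).
    pose proof (factor_ge NR m D0 T NR_gt2 D0_lt_NR (a i) ltac:(lra)).
    split; [lra|apply (factor_le_free_truncated NR m D0 T); auto; lra].
Qed.

Lemma f9_le_fk_convex : t0 <= U -> 2 + (NR - 2) * m < T ->
  exists k t, (k <= N - J)%nat /\ m <= t <= U9 N J m M c k /\
    f9 eps N J m M c a <= fk9 eps N J m M c k t.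
Proof.
  intros Hfree Hk. pose proof NR_gt2. pose proof prefactor_at_point_ge1 as HP.
  destruct (prodR_factor_le_spread Hfree Hk) as (t & p & q & Hpq & Ht & Htsum & Hprod).
  exists q, t. split; [lia|]. split; [split; [lra|apply (le_U9_spread p); auto; lra]|].
  rewrite f9_eq, (fk9_eq q p), (S9_spread p), (B9_spread p) by assumption.
  rewrite <- (free_factor_cap_eq _ m _ T)
    by (pose proof (excess_over_cap NR m D0 T NR_gt2 th); lra).
  replace (m + JR * c + sa) with (m + T) in * by ring.
  eapply Rle_trans; [apply Rmult_le_compat_l; [lra|exact Hprod]|]. right; ring.
Qed.

End Point.
End Proposition9.

Theorem proposition9 (eps : R) (N J : nat) (m M c : R) (a : nat -> R) :
  0 <= eps -> (2 < N)%nat -> (J < N)%nat ->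
  0 < m < 1 -> 0 < M < 1 -> m <= M -> m <= c <= M ->
  (forall i, (i < N - J)%nat -> m <= a i <= M) ->
  (exists t, m <= t <= U9 N J m M c (N - J - 1) /\
             f9 eps N J m M c a <= fdiag9 eps N J m c t) \/
  (exists k t, (k <= N - J)%nat /\ m <= t <= U9 N J m M c k /\
             f9 eps N J m M c a <= fk9 eps N J m M c k t).
Proof.
  intros Heps HN HJ Hm [_ HM] HmM Hc Ha.
  set (U := U9 N J m M c (N - J - 1)).
  set (t0 := sumR (N - J) a / INR (N - J)).
  destruct (Rlt_le_dec U t0) as [Hcap|Hfree].
  - left. exists U. split.
    + split; [apply U_diag_ge_m|]; auto; lra.
    + apply f9_le_fdiag_cap; auto.
  - destruct (Rle_lt_dec (INR J * c + sumR (N - J) a) (2 + (INR N - 2) * m)) as [Hconc|Hconv].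
    + left. exists t0. split.
      * split; [apply (mean_bounds N J m M)|]; auto.
      * apply f9_le_fdiag_concave; auto.
    + right. apply f9_le_fk_convex; auto.
Qed.
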